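(* Let $(U,g_1)$ have constant curvature $K_1$ and $(V,g_2)$ be flat, and let $f$ be a function on $U$. Suppose $u^1,\dots,u^p$ are functions on $U$ with $g_1^*(du^i,du^j)=G_1^{ij}-K_1u^iu^j$ for a constant nondegenerate matrix $G_1$, that $f=u^1$, that $G_1^{1j}=0$ for all $j\ne p$ and $G_1^{1p}=b\neq0$, and that $g_1^*(df,df)=-K_1f^2$. Suppose $v^1,\dots,v^{n_2}$ are functions on $V$ with $g_2^*(dv^k,dv^m)=G_2^{km}$ constant and nondegenerate, and $\phi$ is a function on $V$ with $g_2^*(d\phi,dv^i)=v^i$ for all $i$ and $g_2^*(d\phi,d\phi)=2\phi$. Let $g=g_1+f^{-2}g_2$ on $U\times V$ (contravariant warped product). Then the functions $w=(u^1,\dots,u^{p-1},\ \tilde u^p,\ fv^1,\dots,fv^{n_2})$ with $\tilde u^p=u^p-b\,f\phi$ satisfy $g^*(dw^a,dw^b)=G^{ab}-K_1w^aw^b$ with $G=\begin{pmatrix}G_1&0\\0&G_2\end{pmatrix}$; in particular they form (generalised) flat coordinates for $g$.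
   Context: $g_1,g_2$ are treated as contravariant metrics and $g^*$ (resp. $g_i^*$) denotes the pairing of covectors; functions on $U$ or $V$ are pulled back to $U\times V$. The contravariant metric $g_1+f^{-2}g_2$ acts on covectors by $g^*(\omega,\eta)=g_1^*(\omega_U,\eta_U)+f^{-2}g_2^*(\omega_V,\eta_V)$. *)

(* Local coordinates: U ⊆ R^n1, V ⊆ R^n2 open,
   points are row vectors 'rV[R]_n. *)
From HB Require Import structures.
From mathcomp Require Import all_boot all_order all_algebra.
From mathcomp Require Import all_classical all_reals all_analysis.
Set Implicit Arguments. Unset Strict Implicit. Unset Printing Implicit Defensive.
Import Order.TTheory GRing.Theory Num.Theory.
Import numFieldNormedType.Exports.
Local Open Scope classical_set_scope.
Local Open Scope ring_scope.

Section Defs.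
Variable R : realType.

Definition partial (n : nat) (i : 'I_n) (F : 'rV[R]_n -> R) (x : 'rV[R]_n) : R :=
  'D_(delta_mx 0 i) F x.

Fixpoint smoothk (n : nat) (U : set 'rV[R]_n) (k : nat) (F : 'rV[R]_n -> R) : Prop :=
  (forall x, U x -> differentiable F x) /\
  match k with 0 => True | k'.+1 => forall i, smoothk U k' (partial i F) end.

Definition smooth_on (n : nat) (U : set 'rV[R]_n) (F : 'rV[R]_n -> R) : Prop :=
  forall k, smoothk U k F.

(* contravariant (pseudo-Riemannian) metric on U: smooth, symmetric, nondegenerate *)
Definition is_cmetric (n : nat) (U : set 'rV[R]_n) (g : 'rV[R]_n -> 'M[R]_n) : Prop :=
  (forall i j, smooth_on U (fun x => g x i j)) /\
  (forall x, U x -> (g x)^T = g x) /\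
  (forall x, U x -> g x \in unitmx).

Definition gstar (n : nat) (g : 'rV[R]_n -> 'M[R]_n) (F H : 'rV[R]_n -> R)
  (x : 'rV[R]_n) : R :=
  \sum_(i < n) \sum_(j < n) g x i j * partial i F x * partial j H x.

Definition gcov (n : nat) (g : 'rV[R]_n -> 'M[R]_n) (x : 'rV[R]_n) : 'M[R]_n :=
  invmx (g x).

Definition Gamma (n : nat) (g : 'rV[R]_n -> 'M[R]_n) (k i j : 'I_n)
  (x : 'rV[R]_n) : R :=
  2^-1 * \sum_(l < n) g x k l *
    (partial i (fun z => gcov g z j l) x + partial j (fun z => gcov g z i l) x
     - partial l (fun z => gcov g z i j) x).

(* Riemann tensor R^l_{ijk}, with R(X,Y)Z = ∇_X∇_Y Z - ∇_Y∇_X Z - ∇_[X,Y] Z,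
   R(∂_i,∂_j)∂_k = R^l_{ijk} ∂_l *)
Definition Riem (n : nat) (g : 'rV[R]_n -> 'M[R]_n) (l i j k : 'I_n)
  (x : 'rV[R]_n) : R :=
  partial i (Gamma g l j k) x - partial j (Gamma g l i k) x
  + \sum_(m < n) (Gamma g l i m x * Gamma g m j k x - Gamma g l j m x * Gamma g m i k x).

(* constant sectional curvature K: R(X,Y)Z = K (g(Y,Z) X - g(X,Z) Y) *)
Definition const_curv (n : nat) (U : set 'rV[R]_n) (g : 'rV[R]_n -> 'M[R]_n) (K : R)
  : Prop :=
  forall x, U x -> forall l i j k,
    Riem g l i j k x = K * ((l == i)%:R * gcov g x j k - (l == j)%:R * gcov g x i k).

Definition flat (n : nat) (U : set 'rV[R]_n) (g : 'rV[R]_n -> 'M[R]_n) : Prop :=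
  const_curv U g 0.

(* contravariant warped product g = g1 + f^{-2} g2 on U x V, acting on
   differentials of functions F(x,y):
   g^*(dF,dH) = g1^*(d_U F, d_U H) + f^{-2} g2^*(d_V F, d_V H) *)
Definition gstarW (n1 n2 : nat) (g1 : 'rV[R]_n1 -> 'M[R]_n1) (g2 : 'rV[R]_n2 -> 'M[R]_n2)
  (f : 'rV[R]_n1 -> R) (F H : 'rV[R]_n1 -> 'rV[R]_n2 -> R)
  (x : 'rV[R]_n1) (y : 'rV[R]_n2) : R :=
  gstar g1 (fun x' => F x' y) (fun x' => H x' y) x
  + (f x) ^- 2 * gstar g2 (F x) (H x) y.

(* the functions w = (u^1,...,u^{p-1}, u^p - b f phi, f v^1, ..., f v^{n2}),
   with p = q.+1, u^1 = u ord0, u^p = u ord_max *)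
Definition wcoords (n1 n2 q : nat) (u : 'I_q.+1 -> 'rV[R]_n1 -> R) (f : 'rV[R]_n1 -> R)
  (b : R) (phi : 'rV[R]_n2 -> R) (v : 'I_n2 -> 'rV[R]_n2 -> R)
  (a : 'I_(q.+1 + n2)) : 'rV[R]_n1 -> 'rV[R]_n2 -> R :=
  fun x y => match fintype.split a with
             | inl i => if i == ord_max then u i x - b * f x * phi y else u i x
             | inr k => f x * v k y
             end.

End Defs.

From HB Require Import structures.
From mathcomp Require Import all_boot all_order all_algebra.
From mathcomp Require Import all_classical all_reals all_analysis.
From mathcomp Require Import ring.
Set Implicit Arguments. Unset Strict Implicit. Unset Printing Implicit Defensive.
Import Order.TTheory GRing.Theory Num.Theory.
Import numFieldNormedType.Exports.
Local Open Scope classical_set_scope.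
Local Open Scope ring_scope.

(* Every w^a separates as A(x) + B(x) P(y): w^i = u^i - [i = p] b f phi and
   w^(p+k) = f v^k.  By bilinearity g^*(dw^a, dw^c) expands into g_1^*-pairings
   of the A's and B's and one g_2^*-pairing of the P's, all given by the
   hypotheses, and with G_1^{1j} = [j = p] b each block of (a, c) becomes a field
   identity.  In the (p, p) entry the cross terms -2 b^2 phi and
   f^{-2} (b f)^2 g_2^*(dphi, dphi) = 2 b^2 phi cancel; in the mixed block
   f^{-2} (b f) f g_2^*(dphi, dv^k) = b v^k cancels G_1^{1p} v^k. *)

Section Pairing.
Variable R : realType.

Lemma smooth_on_differentiable (n : nat) (U : set 'rV[R]_n) (F : 'rV[R]_n -> R) x :
  smooth_on U F -> U x -> differentiable F x.
Proof. by move=> sF; exact: (sF 0%N).1. Qed.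

Lemma partial_comb (n : nat) (i : 'I_n) (F H : 'rV[R]_n -> R) (a c : R) x :
  differentiable F x -> differentiable H x ->
  partial i (fun z => a * F z + c * H z) x = a * partial i F x + c * partial i H x.
Proof.
move=> dF dH; rewrite /partial.
have -> : (fun z => a * F z + c * H z) = (a \*: F) + (c \*: H) by [].
rewrite deriveD ?deriveZ //; try exact: diff_derivable.
- exact/derivableZ/diff_derivable.
- exact/derivableZ/diff_derivable.
Qed.

Lemma gstar_tr (n : nat) (g : 'rV[R]_n -> 'M[R]_n) (F H : 'rV[R]_n -> R) x :
  gstar g F H x = gstar (fun z => (g z)^T) H F x.
Proof.
rewrite /gstar exchange_big; apply: eq_bigr => i _; apply: eq_bigr => j _.
by rewrite mxE mulrAC.
Qed.

Lemma gstarC (n : nat) (g : 'rV[R]_n -> 'M[R]_n) (F H : 'rV[R]_n -> R) x :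
  (g x)^T = g x -> gstar g F H x = gstar g H F x.
Proof. by move=> gT; rewrite gstar_tr /gstar /= gT. Qed.

Lemma gstar_combl (n : nat) (g : 'rV[R]_n -> 'M[R]_n) (F H K : 'rV[R]_n -> R) (a c : R) x :
  differentiable F x -> differentiable H x ->
  gstar g (fun z => a * F z + c * H z) K x = a * gstar g F K x + c * gstar g H K x.
Proof.
move=> dF dH; rewrite /gstar !mulr_sumr -big_split; apply: eq_bigr => i _.
rewrite !mulr_sumr -big_split; apply: eq_bigr => j _.
rewrite partial_comb //=; ring.
Qed.

Lemma gstar_combr (n : nat) (g : 'rV[R]_n -> 'M[R]_n) (F H K : 'rV[R]_n -> R) (a c : R) x :
  differentiable F x -> differentiable H x ->
  gstar g K (fun z => a * F z + c * H z) x = a * gstar g K F x + c * gstar g K H x.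
Proof. by move=> dF dH; rewrite !(gstar_tr g K) gstar_combl. Qed.

Lemma gstarZl (n : nat) (g : 'rV[R]_n -> 'M[R]_n) (F K : 'rV[R]_n -> R) (c : R) x :
  differentiable F x -> gstar g (fun z => c * F z) K x = c * gstar g F K x.
Proof.
move=> dF; have -> : (fun z => c * F z) = (fun z => c * F z + 0 * F z).
  by apply: funext => z; rewrite mul0r addr0.
by rewrite gstar_combl // mul0r addr0.
Qed.

Lemma gstarZr (n : nat) (g : 'rV[R]_n -> 'M[R]_n) (F K : 'rV[R]_n -> R) (c : R) x :
  differentiable F x -> gstar g K (fun z => c * F z) x = c * gstar g K F x.
Proof. by move=> dF; rewrite !(gstar_tr g K) gstarZl. Qed.

Lemma gstar_cstl (n : nat) (g : 'rV[R]_n -> 'M[R]_n) (k : R) (K : 'rV[R]_n -> R) x :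
  gstar g (fun _ => k) K x = 0.
Proof.
rewrite /gstar big1 // => i _; rewrite big1 // => j _.
by rewrite /partial derive_cst mulr0 mul0r.
Qed.

Lemma gstar_cstr (n : nat) (g : 'rV[R]_n -> 'M[R]_n) (k : R) (K : 'rV[R]_n -> R) x :
  gstar g K (fun _ => k) x = 0.
Proof. by rewrite gstar_tr gstar_cstl. Qed.

Lemma gstar_near_eql (n : nat) (g : 'rV[R]_n -> 'M[R]_n) (F F' H : 'rV[R]_n -> R) x :
  (\forall z \near x, F z = F' z) -> gstar g F H x = gstar g F' H x.
Proof.
move=> FF'; rewrite /gstar; apply: eq_bigr => i _; apply: eq_bigr => j _.
by rewrite /partial (near_eq_derive _ FF').
Qed.

Lemma gstar_near_eqr (n : nat) (g : 'rV[R]_n -> 'M[R]_n) (F F' H : 'rV[R]_n -> R) x :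
  (\forall z \near x, F z = F' z) -> gstar g H F x = gstar g H F' x.
Proof. by move=> FF'; rewrite !(gstar_tr g H) (gstar_near_eql _ _ FF'). Qed.

Lemma gstarW_separable (n1 n2 : nat) (g1 : 'rV[R]_n1 -> 'M[R]_n1)
  (g2 : 'rV[R]_n2 -> 'M[R]_n2) (f : 'rV[R]_n1 -> R)
  (A1 B1 A2 B2 : 'rV[R]_n1 -> R) (P1 P2 : 'rV[R]_n2 -> R) x y :
  differentiable A1 x -> differentiable B1 x ->
  differentiable A2 x -> differentiable B2 x ->
  differentiable P1 y -> differentiable P2 y ->
  gstarW g1 g2 f (fun x' y' => A1 x' + B1 x' * P1 y')
                 (fun x' y' => A2 x' + B2 x' * P2 y') x y
  = gstar g1 A1 A2 x + P2 y * gstar g1 A1 B2 x + P1 y * gstar g1 B1 A2 x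
    + P1 y * P2 y * gstar g1 B1 B2 x + f x ^- 2 * (B1 x * B2 x * gstar g2 P1 P2 y).
Proof.
move=> dA1 dB1 dA2 dB2 dP1 dP2; rewrite /gstarW.
have sepU (A B : 'rV[R]_n1 -> R) (P : 'rV[R]_n2 -> R) :
    (fun x' => A x' + B x' * P y) = (fun x' => 1 * A x' + P y * B x').
  by apply: funext => z; rewrite mul1r mulrC.
have sepV (A B : 'rV[R]_n1 -> R) (P : 'rV[R]_n2 -> R) :
    (fun y' => A x + B x * P y') = (fun y' => A x * (fun _ => 1) y' + B x * P y').
  by apply: funext => z; rewrite mulr1.
have d1 : differentiable (fun _ : 'rV[R]_n2 => 1 : R) y by exact: differentiable_cst.
rewrite !sepU gstar_combl // !gstar_combr //.
rewrite !sepV gstar_combl // !gstar_combr // !gstar_cstl !gstar_cstr; ring.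
Qed.

Lemma gstarWC (n1 n2 : nat) (g1 : 'rV[R]_n1 -> 'M[R]_n1) (g2 : 'rV[R]_n2 -> 'M[R]_n2)
  (f : 'rV[R]_n1 -> R) (F H : 'rV[R]_n1 -> 'rV[R]_n2 -> R) x y :
  (g1 x)^T = g1 x -> (g2 y)^T = g2 y ->
  gstarW g1 g2 f F H x y = gstarW g1 g2 f H F x y.
Proof. by move=> g1T g2T; rewrite /gstarW gstarC // [gstar g2 _ _ _]gstarC. Qed.

End Pairing.

Section WarpedFlatCoordinates.
Variables (R : realType) (n1 n2 q : nat).
Variables (g1 : 'rV[R]_n1 -> 'M[R]_n1) (g2 : 'rV[R]_n2 -> 'M[R]_n2).
Variables (K1 b : R) (f : 'rV[R]_n1 -> R) (u : 'I_q.+1 -> 'rV[R]_n1 -> R).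
Variables (v : 'I_n2 -> 'rV[R]_n2 -> R) (phi : 'rV[R]_n2 -> R).
Variables (G1 : 'M[R]_q.+1) (G2 : 'M[R]_n2) (x : 'rV[R]_n1) (y : 'rV[R]_n2).

Local Notation w := (wcoords u f b phi v).

Lemma wcoords_lshift (i : 'I_q.+1) :
  w (lshift n2 i) = fun x' y' => u i x' + (- (i == ord_max)%:R * b * f x') * phi y'.
Proof.
apply: funext => x'; apply: funext => y'.
by rewrite /wcoords (unsplitK (inl _ i)); case: eqP => _ /=; ring.
Qed.

Lemma wcoords_rshift (k : 'I_n2) : w (rshift q.+1 k) = fun x' y' => 0 + f x' * v k y'.
Proof.
by apply: funext => x'; apply: funext => y'; rewrite /wcoords (unsplitK (inr _ k)) add0r.
Qed.

Hypotheses (g1_sym : (g1 x)^T = g1 x) (g2_sym : (g2 y)^T = g2 y).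
Hypotheses (f_diff : differentiable f x) (u_diff : forall i, differentiable (u i) x).
Hypotheses (v_diff : forall k, differentiable (v k) y) (phi_diff : differentiable phi y).
Hypothesis f_neq0 : f x != 0.
Hypothesis f_near_u0 : \forall z \near x, f z = u ord0 z.
Hypothesis G1_row0 : forall j, G1 ord0 j = (j == ord_max)%:R * b.
Hypothesis gstar_uu : forall i j, gstar g1 (u i) (u j) x = G1 i j - K1 * u i x * u j x.
Hypothesis gstar_ff : gstar g1 f f x = - K1 * f x ^+ 2.
Hypothesis gstar_vv : forall k m, gstar g2 (v k) (v m) y = G2 k m.
Hypothesis gstar_phiv : forall k, gstar g2 phi (v k) y = v k y.
Hypothesis gstar_phiphi : gstar g2 phi phi y = 2 * phi y.

Lemma gstar_uf (i : 'I_q.+1) :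
  gstar g1 (u i) f x = (i == ord_max)%:R * b - K1 * u i x * f x.
Proof.
have f_x : f x = u ord0 x by exact: nbhs_singleton f_near_u0.
rewrite (gstar_near_eqr _ _ f_near_u0) gstarC // gstar_uu G1_row0 f_x; ring.
Qed.

Lemma gstar_fu (j : 'I_q.+1) :
  gstar g1 f (u j) x = (j == ord_max)%:R * b - K1 * f x * u j x.
Proof. by rewrite gstarC // gstar_uf mulrAC. Qed.

Lemma gstar_vphi (k : 'I_n2) : gstar g2 (v k) phi y = v k y.
Proof. by rewrite gstarC. Qed.

Let warp_diff (i : 'I_q.+1) : differentiable (fun x' => - (i == ord_max)%:R * b * f x') x.
Proof. exact: differentiableZ. Qed.

Let zero_diff : differentiable (fun _ : 'rV[R]_n1 => 0 : R) x.
Proof. exact: differentiable_cst. Qed.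

Lemma gstarW_wcoords_UU (i j : 'I_q.+1) :
  gstarW g1 g2 f (w (lshift n2 i)) (w (lshift n2 j)) x y
  = G1 i j - K1 * w (lshift n2 i) x y * w (lshift n2 j) x y.
Proof.
rewrite !wcoords_lshift gstarW_separable //.
rewrite !gstarZl ?gstarZr // gstar_uu gstar_uf gstar_fu gstar_ff gstar_phiphi.
by field.
Qed.

Lemma gstarW_wcoords_UV (i : 'I_q.+1) (k : 'I_n2) :
  gstarW g1 g2 f (w (lshift n2 i)) (w (rshift q.+1 k)) x y
  = - K1 * w (lshift n2 i) x y * w (rshift q.+1 k) x y.
Proof.
rewrite wcoords_lshift wcoords_rshift gstarW_separable //.
rewrite !gstarZl // !gstar_cstr gstar_uf gstar_ff gstar_phiv.
by field.
Qed.

Lemma gstarW_wcoords_VV (k m : 'I_n2) :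
  gstarW g1 g2 f (w (rshift q.+1 k)) (w (rshift q.+1 m)) x y
  = G2 k m - K1 * w (rshift q.+1 k) x y * w (rshift q.+1 m) x y.
Proof.
rewrite !wcoords_rshift gstarW_separable //.
rewrite !gstar_cstl !gstar_cstr gstar_ff gstar_vv.
by field.
Qed.

Lemma gstarW_wcoords (a c : 'I_(q.+1 + n2)) :
  gstarW g1 g2 f (w a) (w c) x y = block_mx G1 0 0 G2 a c - K1 * w a x y * w c x y.
Proof.
rewrite -(splitK a) -(splitK c).
case: (fintype.split a) => [i|k]; case: (fintype.split c) => [j|m] /=.
- by rewrite block_mxEul gstarW_wcoords_UU.
- by rewrite block_mxEur mxE gstarW_wcoords_UV; ring.
- by rewrite block_mxEdl mxE gstarWC // gstarW_wcoords_UV; ring.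
- by rewrite block_mxEdr gstarW_wcoords_VV.
Qed.

End WarpedFlatCoordinates.

Theorem proposition4p2 (R : realType) (n1 n2 q : nat)
  (U : set 'rV[R]_n1) (V : set 'rV[R]_n2)
  (g1 : 'rV[R]_n1 -> 'M[R]_n1) (g2 : 'rV[R]_n2 -> 'M[R]_n2) (K1 : R)
  (f : 'rV[R]_n1 -> R) (u : 'I_q.+1 -> 'rV[R]_n1 -> R) (G1 : 'M[R]_q.+1) (b : R)
  (v : 'I_n2 -> 'rV[R]_n2 -> R) (G2 : 'M[R]_n2) (phi : 'rV[R]_n2 -> R) :
  open U -> open V ->
  is_cmetric U g1 -> is_cmetric V g2 ->
  const_curv U g1 K1 -> flat V g2 ->
  smooth_on U f -> (forall x, U x -> f x != 0) ->
  (forall i, smooth_on U (u i)) ->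
  G1 \in unitmx ->
  (forall i j x, U x -> gstar g1 (u i) (u j) x = G1 i j - K1 * u i x * u j x) ->
  (forall x, U x -> f x = u ord0 x) ->
  (forall j, j != ord_max -> G1 ord0 j = 0) ->
  G1 ord0 ord_max = b -> b != 0 ->
  (forall x, U x -> gstar g1 f f x = - K1 * f x ^+ 2) ->
  (forall k, smooth_on V (v k)) ->
  G2 \in unitmx ->
  (forall k m y, V y -> gstar g2 (v k) (v m) y = G2 k m) ->
  smooth_on V phi ->
  (forall i y, V y -> gstar g2 phi (v i) y = v i y) ->
  (forall y, V y -> gstar g2 phi phi y = 2 * phi y) ->
  forall x y, U x -> V y ->
  forall a c : 'I_(q.+1 + n2),
    gstarW g1 g2 f (wcoords u f b phi v a) (wcoords u f b phi v c) x y
    = block_mx G1 0 0 G2 a c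
      - K1 * wcoords u f b phi v a x y * wcoords u f b phi v c x y.
Proof.
move=> oU _ [_ [g1_sym _]] [_ [g2_sym _]] _ _ f_smooth f_neq0 u_smooth _ gstar_uu f_u0
  G1_0j G1_0p _ gstar_ff v_smooth _ gstar_vv phi_smooth gstar_phiv gstar_phiphi
  x y Ux Vy a c.
apply: gstarW_wcoords.
- exact: g1_sym.
- exact: g2_sym.
- exact: smooth_on_differentiable f_smooth Ux.
- by move=> i; exact: smooth_on_differentiable (u_smooth i) Ux.
- by move=> k; exact: smooth_on_differentiable (v_smooth k) Vy.
- exact: smooth_on_differentiable phi_smooth Vy.
- exact: f_neq0.
- by apply: filterS (open_nbhs_nbhs (conj oU Ux)) => z; exact: f_u0.
- by move=> j; case: eqVneq => [->|/G1_0j ->]; rewrite ?G1_0p ?mul1r ?mul0r.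
- by move=> i j; exact: gstar_uu.
- exact: gstar_ff.
- by move=> k m; exact: gstar_vv.
- by move=> k; exact: gstar_phiv.
- exact: gstar_phiphi.
Qed.
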